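(* Let $n\ge 2$, $d_1,\dots,d_n\ge 1$, $L_i\in\mathbb{C}^{d_i\times d_i}$ ($i=1,\dots,n$) and $C_{i,i-1}\in\mathbb{C}^{d_i\times d_{i-1}}$ ($i=2,\dots,n$). Assume: (i) each $L_i$ is invertible and diagonalizable, $L_iV_i=V_i\Lambda_i$ with $V_i$ invertible and $\Lambda_i=\mathrm{diag}(\lambda_{i,1},\dots,\lambda_{i,d_i})$; (ii) $\sigma(L_i)\cap\sigma(L_j)=\emptyset$ for all $i\neq j$; (iii) $\|L_1\|<\|L_2\|<\cdots<\|L_n\|\le 1$. Then for every $i\in\{2,\dots,n\}$, every $x=(x_1,\dots,x_n)$ and every $t\ge 0$, $$\Pi_i\circ\mathsf{Lin}^{\circ t}(x)=\sum_{j=1}^{i}(-1)^{i-j}D_{i,j}L_j^t\,\mathsf{pert}_j(x_1,\dots,x_j).$$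
   Context: Each $\mathbb{C}^{d_i}$ carries a fixed norm and matrices the induced operator norm. $\Pi_i(x_1,\dots,x_n)=x_i$; $\mathsf{Lin}(x_1,\dots,x_n)=(L_1x_1,\;L_2x_2+C_{2,1}x_1,\;\dots,\;L_nx_n+C_{n,n-1}x_{n-1})$ and $\mathsf{Lin}^{\circ t}$ is its $t$-fold iterate. Matrices $D_{i,j}\in\mathbb{C}^{d_i\times d_j}$ ($1\le j\le i\le n$) are defined recursively in $i$: $D_{i,i}=I_{d_i}$; for $i\ge 2$ and $1\le j\le i-1$, $\tilde C_{i,j}\in\mathbb{C}^{d_i\times d_j}$ has entries $[\tilde C_{i,j}]_{\ell,m}=[V_i^{-1}C_{i,i-1}D_{i-1,j}V_j]_{\ell,m}(1-\lambda_{j,m}/\lambda_{i,\ell})^{-1}$ and $D_{i,j}=L_i^{-1}V_i\tilde C_{i,j}V_j^{-1}$. The maps $\mathsf{pert}_i:\mathbb{C}^{d_1}\times\cdots\times\mathbb{C}^{d_i}\to\mathbb{C}^{d_i}$ are $\mathsf{pert}_1(x_1)=x_1$ and $\mathsf{pert}_i(x_1,\dots,x_i)=x_i+\sum_{j=1}^{i-1}(-1)^{i-1-j}D_{i,j}\mathsf{pert}_j(x_1,\dots,x_j)$ for $i\ge 2$. *)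

From HB Require Import structures.
From mathcomp Require Import all_boot all_order all_algebra.
From mathcomp Require Import complex.
From mathcomp Require Import boolp classical_sets reals.
Set Implicit Arguments. Unset Strict Implicit. Unset Printing Implicit Defensive.
Import Order.TTheory GRing.Theory Num.Theory.
Local Open Scope ring_scope.

Section Defs.
Variable R : realType.
Local Notation C := (R[i]).

Definition cmod (a : C) : R := ComplexField.Normc.normc a.

Definition is_vnorm (m : nat) (N : 'cV[C]_m -> R) : Prop :=
  [/\ forall v, 0 <= N v,
      forall v, N v = 0 -> v = 0,
      forall (a : C) v, N (a *: v) = cmod a * N v
    & forall v w, N (v + w) <= N v + N w].

Definition opnorm (m : nat) (N : 'cV[C]_m -> R) (A : 'M[C]_m) : R :=
  sup [set r : R | exists v : 'cV[C]_m, N v <= 1 /\ r = N (A *m v)].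

Definition spectrum (m : nat) (A : 'M[C]_m) : C -> Prop :=
  fun a => eigenvalue A a.

Variable d : nat -> nat.
Variable L : forall i : nat, 'M[C]_(d i).
Variable Cm : forall i : nat, 'M[C]_(d i, d i.-1).
Variable V : forall i : nat, 'M[C]_(d i).
Variable lam : forall i : nat, 'I_(d i) -> C.      (* lam i k = lambda_{i,k+1} *)

(* Blocks are indexed 1..n (index 0 unused). *)
Definition Lin (x : forall i : nat, 'cV[C]_(d i)) : forall i : nat, 'cV[C]_(d i) :=
  fun i => match i return 'cV[C]_(d i) with
           | 0 => 0
           | i'.+1 => L i'.+1 *m x i'.+1 + (if i' == 0%N then 0 else Cm i'.+1 *m x i')
           end.

Fixpoint Dm (i j : nat) {struct i} : 'M[C]_(d i, d j) :=
  if i == j then conform_mx 0 (1%:M : 'M[C]_(d i)) else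
  match i return 'M[C]_(d i, d j) with
  | 0 => 0
  | i'.+1 =>
      if (1 <= j <= i')%N then
        let M := invmx (V i'.+1) *m Cm i'.+1 *m Dm i' j *m V j in
        let Ct : 'M[C]_(d i'.+1, d j) :=
          \matrix_(l, k) (M l k * (1 - @lam j k / @lam i'.+1 l)^-1) in
        invmx (L i'.+1) *m V i'.+1 *m Ct *m invmx (V j)
      else 0
  end.

(* pertAll i j = pert_j(x_1,...,x_j) for 1 <= j <= i *)
Fixpoint pertAll (x : forall i : nat, 'cV[C]_(d i)) (i : nat) {struct i}
  : forall j : nat, 'cV[C]_(d j) :=
  match i with
  | 0 => fun j => 0
  | i'.+1 => fun j =>
      if j == i'.+1 then
        x j + \sum_(1 <= k < i'.+1) ((-1) ^+ (i' - k) *: (Dm j k *m pertAll x i' k))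
      else pertAll x i' j
  end.

Definition pert (j : nat) (x : forall i : nat, 'cV[C]_(d i)) : 'cV[C]_(d j) :=
  pertAll x j j.

End Defs.

(* D_{i,j} solves the Sylvester equation
   L_i D_{i,j} = D_{i,j} L_j + C_{i,i-1} D_{i-1,j}, which is solvable because
   the spectra of L_i and L_j are disjoint, and is written out explicitly in the
   eigenbases V_i, V_j.  With this equation, the right-hand side satisfies the same
   recursion in (t, i) as the blocks of Lin^t(x); at t = 0 it reduces to x_i, since
   pert is defined by inverting exactly this triangular relation.  Only the algebraic
   hypotheses (i) and (ii) are used. *)

From Pilot Require Import Defs.
From HB Require Import structures.
From mathcomp Require Import all_boot all_order all_algebra.
From mathcomp Require Import complex.
From mathcomp Require Import ring.
From mathcomp Require Import boolp classical_sets reals.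
Import Order.TTheory GRing.Theory Num.Theory.
Set Implicit Arguments. Unset Strict Implicit. Unset Printing Implicit Defensive.
Local Open Scope ring_scope.

Section Diagonalizable.
Variables (F : fieldType) (m : nat) (A P : 'M[F]_m) (a : 'I_m -> F).
Hypotheses (P_unit : P \in unitmx) (AP : A *m P = P *m diag_mx (\row_k a k)).

Lemma diagonalized_eigenvalue l : eigenvalue A (a l).
Proof.
have invP_A : invmx P *m A = diag_mx (\row_k a k) *m invmx P.
  by rewrite -[LHS]mulmx1 -(mulmxV P_unit) !mulmxA -(mulmxA _ A) AP mulmxA mulVmx // mul1mx.
apply/eigenvalueP; exists (row l (invmx P)).
  by rewrite -row_mul invP_A row_mul row_diag_mx mxE -scalemxAl -rowE.
apply: contraTneq isT => row0.
have : row l (invmx P) *m P = delta_mx 0 l by rewrite -row_mul mulVmx // row1.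
by rewrite row0 mul0mx => /matrixP /(_ 0 l); rewrite !mxE !eqxx => /eqP; rewrite eq_sym oner_eq0.
Qed.

End Diagonalizable.

Lemma unitmx_eigenvalue_neq0 (F : fieldType) m (A : 'M[F]_m) c :
  A \in unitmx -> eigenvalue A c -> c != 0.
Proof.
move=> A_unit /eigenvalueP [v vA v_neq0]; apply: contra_neq v_neq0 => c0.
by rewrite -(mulmxK A_unit v) vA c0 scale0r mul0mx.
Qed.

Section DiagonalSylvester.
Variables (F : fieldType) (m p : nat) (A P : 'M[F]_m) (B Q : 'M[F]_p).
Variables (a : 'I_m -> F) (b : 'I_p -> F).

(* In the eigenbases of [A] and [B] the equation [A *m X = X *m B + G] decouples:
   [(1 - b k / a l) * (P^-1 A X Q) l k = (P^-1 G Q) l k]. *)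
Definition sylvester_sol (G : 'M[F]_(m, p)) : 'M[F]_(m, p) :=
  invmx A *m P
    *m \matrix_(l, k) ((invmx P *m G *m Q) l k * (1 - b k / a l)^-1)
    *m invmx Q.

Hypotheses (A_unit : A \in unitmx) (P_unit : P \in unitmx) (Q_unit : Q \in unitmx).
Hypotheses (AP : A *m P = P *m diag_mx (\row_k a k))
           (BQ : B *m Q = Q *m diag_mx (\row_k b k)).
Hypothesis AB_disjoint : forall c, ~ (eigenvalue A c /\ eigenvalue B c).

Lemma sylvester_solP G : A *m sylvester_sol G = sylvester_sol G *m B + G.
Proof.
rewrite /sylvester_sol; set M := invmx P *m G *m Q; set X := \matrix_(l, k) _.
have diag_eq : diag_mx (\row_k a k) *m X = X *m diag_mx (\row_k b k) + diag_mx (\row_k a k) *m M.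
  apply/matrixP => l k; rewrite !mul_diag_mx mul_mx_diag !mxE.
  have eig_a := diagonalized_eigenvalue P_unit AP.
  have eig_b := diagonalized_eigenvalue Q_unit BQ.
  have a_neq0 : a l != 0 := unitmx_eigenvalue_neq0 A_unit (eig_a l).
  have ab_neq : a l != b k.
    by apply/eqP => ab; apply: (@AB_disjoint (a l)); rewrite {2}ab eig_a eig_b.
  by move: (\sum_j _) => c; field; rewrite a_neq0 subr_eq0 ab_neq.
have G_conj : G = P *m M *m invmx Q by rewrite /M !mulmxA mulmxV // mul1mx mulmxK.
have B_conj : B = Q *m diag_mx (\row_k b k) *m invmx Q by rewrite -BQ mulmxK.
rewrite !mulmxA mulmxV // mul1mx; apply: (can_inj (mulKmx A_unit)).
rewrite mulmxDr !mulmxA mulmxV // mul1mx G_conj B_conj !mulmxA mulmxKV // AP.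
by rewrite -!(mulmxA P) diag_eq mulmxDl mulmxDr !mulmxA.
Qed.

End DiagonalSylvester.

Section Blocks.
(* Keeps the block index of [lam] explicit, as in the definition of [Dm]. *)
Local Unset Implicit Arguments.
Variables (R : realType) (d : nat -> nat).
Variables (L : forall i, 'M[R[i]]_(d i)) (Cm : forall i, 'M[R[i]]_(d i, d i.-1)).
Variables (V : forall i, 'M[R[i]]_(d i)) (lam : forall i, 'I_(d i) -> R[i]).

Local Notation D := (Dm L Cm V lam).
Local Notation pert j x := (pert L Cm V lam j x).

Lemma Dm_id i : D i i = 1%:M.
Proof. by case: i => [|i] /=; rewrite ?eqxx conform_mx_id. Qed.

Lemma DmS i j : (1 <= j <= i)%N ->
  D i.+1 j = sylvester_sol (L i.+1) (V i.+1) (V j) (lam i.+1) (lam j) (Cm i.+1 *m D i j).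
Proof.
move=> j_le_i; have j_neq : i.+1 != j by rewrite gtn_eqF // ltnS; case/andP: j_le_i.
by rewrite /= (negbTE j_neq) j_le_i /sylvester_sol !mulmxA.
Qed.

(* Otherwise [/=] unfolds [Dm] inside the big sums below. *)
#[local] Arguments Dm : simpl never.

Lemma pertAll_pert x i j : (j <= i)%N -> pertAll L Cm V lam x i j = pert j x.
Proof.
elim: i => [|i IHi] j_le_i; first by move: j_le_i; rewrite leqn0 => /eqP ->.
rewrite /=; case: eqP => [->|/eqP j_neq]; first by rewrite /Defs.pert /= eqxx.
by apply: IHi; rewrite -ltnS ltn_neqAle j_neq j_le_i.
Qed.

Lemma pertS x i : pert i.+1 x =
  x i.+1 + \sum_(1 <= j < i.+1) ((-1) ^+ (i - j) *: (D i.+1 j *m pert j x)).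
Proof.
rewrite /Defs.pert /= eqxx; congr (_ + _); apply: eq_big_nat => j /andP[_ j_lt_i].
by rewrite pertAll_pert // -ltnS.
Qed.

Definition pert_expansion t x i : 'cV[R[i]]_(d i) :=
  \sum_(1 <= j < i.+1) ((-1) ^+ (i - j) *: (D i j *m (L j ^+ t *m pert j x))).

Lemma pert_expansion0 x i : (1 <= i)%N -> pert_expansion 0 x i = x i.
Proof.
case: i => // i _; rewrite /pert_expansion big_nat_recr //= subnn expr0 scale1r Dm_id.
rewrite expr0 !mul1mx pertS addrCA -big_split /= big_nat_cond big1 ?addr0 //.
move=> j /andP[/andP[_ j_le_i] _].
by rewrite expr0 mul1mx subSn // exprS mulN1r scaleNr addNr.
Qed.

Lemma pert_expansion1 t x : pert_expansion t.+1 x 1 = L 1 *m pert_expansion t x 1.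
Proof. by rewrite /pert_expansion !big_nat1 subnn expr0 !scale1r Dm_id !mul1mx exprS mulmxA. Qed.

Variable n : nat.
Hypothesis Dm_sylvester : forall i j, (1 <= j)%N -> (j < i <= n)%N ->
  L i *m D i j = D i j *m L j + Cm i *m D i.-1 j.

Lemma pert_expansionS t x i : (i.+2 <= n)%N ->
  pert_expansion t.+1 x i.+2 =
  L i.+2 *m pert_expansion t x i.+2 + Cm i.+2 *m pert_expansion t x i.+1.
Proof.
move=> i_lt_n; rewrite /pert_expansion (big_nat_recr i.+2) // (big_nat_recr i.+2) //=.
rewrite subnn expr0 !scale1r Dm_id !mul1mx exprS mulmxDr -addrAC -mulmxA; congr (_ + _).
rewrite !mulmx_sumr -big_split; apply: eq_big_nat => j /andP[j_ge1 j_lt] /=.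
rewrite -!scalemxAr subSn // !exprS mulN1r !scaleNr !mulmxA Dm_sylvester ?j_ge1 ?j_lt //.
by rewrite !mulmxDl scalerDr opprD addrNK.
Qed.

Lemma iter_LinE t x i : (1 <= i <= n)%N -> iter t (Lin L Cm) x i = pert_expansion t x i.
Proof.
elim: t i => [|t IHt] i /andP[i_ge1 i_le_n]; first by rewrite pert_expansion0.
case: i i_ge1 i_le_n => [|[|i]] // _ i_le_n.
  by rewrite pert_expansion1 -IHt //= addr0.
by rewrite pert_expansionS // -!IHt ?i_le_n ?(ltnW i_le_n).
Qed.

End Blocks.

Theorem lemma3 (R : realType) (n : nat) (d : nat -> nat)
  (N : forall i : nat, 'cV[R[i]]_(d i) -> R)
  (L : forall i : nat, 'M[R[i]]_(d i))
  (Cm : forall i : nat, 'M[R[i]]_(d i, d i.-1))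
  (V : forall i : nat, 'M[R[i]]_(d i))
  (lam : forall i : nat, 'I_(d i) -> R[i]) :
  (2 <= n)%N ->
  (forall i, (1 <= i <= n)%N -> (1 <= d i)%N) ->
  (forall i, (1 <= i <= n)%N -> is_vnorm (N i)) ->
  (* (i) *)
  (forall i, (1 <= i <= n)%N ->
     [/\ L i \in unitmx, V i \in unitmx
       & L i *m V i = V i *m diag_mx (\row_k lam i k)]) ->
  (* (ii) *)
  (forall i j, (1 <= i <= n)%N -> (1 <= j <= n)%N -> i <> j ->
     forall a, ~ (spectrum (L i) a /\ spectrum (L j) a)) ->
  (* (iii) *)
  (forall i, (1 <= i < n)%N -> opnorm (N i) (L i) < opnorm (N i.+1) (L i.+1)) ->
  opnorm (N n) (L n) <= 1 ->
  forall i, (2 <= i <= n)%N ->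
  forall (x : forall j : nat, 'cV[R[i]]_(d j)) (t : nat),
    iter t (Lin L Cm) x i =
    \sum_(1 <= j < i.+1)
       ((-1) ^+ (i - j) *: (Dm L Cm V lam i j *m (L j ^+ t *m pert L Cm V lam j x))).
Proof.
move=> _ _ _ diagL disjL _ _ i /andP[i_ge2 i_le_n] x t.
apply: (@iter_LinE R d L Cm V lam n); last by rewrite i_le_n (ltnW i_ge2).
move=> [|k] j j_ge1 /andP[j_le_k k_lt_n] //.
have k_range : (1 <= k.+1 <= n)%N by [].
have j_range : (1 <= j <= n)%N by rewrite j_ge1 (leq_trans (ltnW j_le_k)).
have [Lk_unit Vk_unit LkV] := diagL _ k_range.
have [_ Vj_unit LjV] := diagL _ j_range.
rewrite DmS ?j_ge1 //; apply: sylvester_solP => // c.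
by apply: disjL => // kj; move: j_le_k; rewrite kj ltnn.
Qed.
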